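(* In the setting and construction described in the context, with $M_{s,t}=(1+R(4,R(4,s)))^{t-2}$: (1) $|S_{t-1}|\le M_{s,t}$ (a constant depending only on $s$ and $t$); (2) $V\setminus(S_{t-1}\cup N(S_{t-1}))=\emptyset$, i.e. $S_{t-1}$ is a dominating set of $G$.
   Context: All graphs are finite and simple. $P_t$ is the path on $t$ vertices; $K_4$ is the complete graph on $4$ vertices; $SDK_s$ is the one-subdivision of $K_{1,s}$ (replace each edge $uv$ of the star $K_{1,s}$ by a path $u w v$ through a new vertex $w$). A graph is $\mathcal{H}$-free if it has no induced subgraph isomorphic to a member of $\mathcal{H}$. $R(k,l)$ denotes the Ramsey number: the least integer such that every graph on at least $R(k,l)$ vertices contains a clique on $k$ vertices or a stable set on $l$ vertices. For $X\subseteq V$, $N(X)=\bigcup_{v\in X}N(v)$. A set $D\subseteq V$ is dominating if every vertex outside $D$ has a neighbor in $D$. Setting: $s,t$ are positive integers with $t\ge 2$, and $G=(V,E)$ is a connected $(P_t,SDK_s,K_4)$-free graph. Fix a vertex $a\in V$, and set $S_1=\{a\}$. For $i=1,2,\dots,t-2$ define $S_{i+1}$ as follows: let $B_i=N(S_i)$ and $W_i=V\setminus(B_i\cup S_i)$; enumerate $S_i=\{v_1,\dots,v_{|S_i|}\}$ and for $j=1,\dots,|S_i|$ let $B_i^j=\{v\in B_i\setminus\bigcup_{k<j}B_i^k : v\text{ is adjacent to }v_j\}$ (so $B_i=\bigcup_j B_i^j$); for each $j$ let $X_i^j\subseteq B_i^j$ be an inclusion-minimal set such that every $w\in W_i$ with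 $N(w)\cap B_i^j\neq\emptyset$ satisfies $N(w)\cap X_i^j\ne\emptyset$; let $X_i=\bigcup_j X_i^j$ and $S_{i+1}=S_i\cup X_i$. The choices of enumeration and of minimal sets are arbitrary. *)

From mathcomp Require Import all_boot.
From Stdlib Require Import ClassicalDescription.
Set Implicit Arguments. Unset Strict Implicit. Unset Printing Implicit Defensive.

Definition simple_graph (T : finType) (e : rel T) : Prop :=
  symmetric e /\ irreflexive e.

Definition connected_graph (T : finType) (e : rel T) : Prop :=
  forall x y : T, connect e x y.

Definition has_induced (U : finType) (h : rel U) (T : finType) (e : rel T) : Prop :=
  exists f : U -> T, injective f /\ forall x y, e (f x) (f y) = h x y.

Definition induced_free (U : finType) (h : rel U) (T : finType) (e : rel T) : Prop :=
  ~ has_induced h e.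

Definition path_rel (t : nat) : rel 'I_t :=
  fun i j => (i.+1 == j :> nat) || (j.+1 == i :> nat).

Arguments path_rel t : clear implicits.

Definition complete_rel (n : nat) : rel 'I_n := fun i j => i != j.

Arguments complete_rel n : clear implicits.

(* SDK_s: the one-subdivision of the star K_{1,s}.
   None = centre u; inl i = subdivision vertex w_i; inr i = leaf v_i. *)
Definition sdk_rel (s : nat) : rel (option ('I_s + 'I_s)) :=
  fun x y =>
    match x, y with
    | None, Some (inl _) => true
    | Some (inl _), None => true
    | Some (inl i), Some (inr j) => i == j
    | Some (inr i), Some (inl j) => i == j
    | _, _ => false
    end.

Arguments sdk_rel s : clear implicits.

Definition is_clique (T : finType) (e : rel T) (A : {set T}) : bool :=
  [forall x in A, forall y in A, (x != y) ==> e x y].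
Definition is_stable (T : finType) (e : rel T) (A : {set T}) : bool :=
  [forall x in A, forall y in A, ~~ e x y].

Definition ramsey_prop (k l n : nat) : Prop :=
  forall (m : nat) (e : rel 'I_m), simple_graph e -> n <= m ->
    (exists A : {set 'I_m}, #|A| = k /\ is_clique e A) \/
    (exists A : {set 'I_m}, #|A| = l /\ is_stable e A).

Definition ramsey_bool (k l : nat) : pred nat :=
  fun n => if excluded_middle_informative (ramsey_prop k l n) then true else false.

(* R(k,l): the least n with ramsey_prop k l n (exists by Ramsey's theorem;
   the fallback value 0 is never used). *)
Definition Ramsey (k l : nat) : nat :=
  match excluded_middle_informative (exists n, ramsey_bool k l n) with
  | left h => ex_minn h
  | right _ => 0
  end.

Definition nbhd (T : finType) (e : rel T) (v : T) : {set T} := [set w | e v w].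
Definition nbhdS (T : finType) (e : rel T) (X : {set T}) : {set T} :=
  \bigcup_(v in X) nbhd e v.

(* Given B and an enumeration vs = [v_1; ...; v_m] of S, the list
   [B^1; ...; B^m] with B^j = {v in B \ (B^1 u ... u B^{j-1}) : v ~ v_j}. *)
Fixpoint Bparts_aux (T : finType) (e : rel T) (B acc : {set T}) (vs : seq T)
  : seq {set T} :=
  match vs with
  | [::] => [::]
  | v :: vs' =>
      let Bj := [set w in B :\: acc | e v w] in
      Bj :: Bparts_aux e B (acc :|: Bj) vs'
  end.

Definition Bparts (T : finType) (e : rel T) (B : {set T}) (vs : seq T) :=
  Bparts_aux e B set0 vs.

Definition dom_prop (T : finType) (e : rel T) (W Bj : {set T}) : pred {set T} :=
  fun X => (X \subset Bj) &&
    [forall w in W, [exists b in Bj, e w b] ==> [exists x in X, e w x]].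

(* One step S_i -> S_{i+1} of the construction, for some choice of
   enumeration and of inclusion-minimal sets X_i^j. *)
Definition constr_step (T : finType) (e : rel T) (S S' : {set T}) : Prop :=
  let B := nbhdS e S in
  let W := ~: (B :|: S) in
  exists vs : seq T, uniq vs /\ (forall x, (x \in vs) = (x \in S)) /\
  exists Xs : seq {set T}, size Xs = size vs /\
    (forall j, j < size vs ->
       minset (dom_prop e W (nth set0 (Bparts e B vs) j)) (nth set0 Xs j)) /\
    S' = S :|: \bigcup_(X <- Xs) X.

From mathcomp Require Import all_boot zify.
From Stdlib Require Import ClassicalDescription.
Set Implicit Arguments. Unset Strict Implicit. Unset Printing Implicit Defensive.

(* Every X = X_i^j is an inclusion-minimal subset of the layer B_i^j
   dominating the vertices of W_i that see B_i^j, so each x ∈ X has a private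
   neighbour p(x) ∈ W_i, and all of X is adjacent to v_j.  If |X| exceeded
   R(4,R(4,s)), Ramsey's theorem in the K_4-free graph would give a stable
   C ⊆ X with |C| = R(4,s), then a D ⊆ C with p(D) stable and |D| = s; and
   v_j, D, p(D) would span an induced SDK_s.  Hence |S_{i+1}| <= (1+R)|S_i|.

   Each step satisfies S_i ⊆ S_{i+1} ⊆ N[S_i], and every vertex
   at distance 2 from S_i is a neighbour of S_{i+1} ([bfs_step]).  By
   induction on i, a vertex at distance 2 from S_i ends an induced path on
   i+1 vertices; if S_{t-1} were not dominating, connectivity would produce
   such a vertex for i = t-1, i.e. an induced P_t. *)

Section Cliques.
Variables (T : finType) (e : rel T).

Lemma cliqueP (A : {set T}) :
  reflect (forall x y, x \in A -> y \in A -> x != y -> e x y) (is_clique e A).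
Proof.
apply: (iffP forallP) => [H x y xA yA nxy | H x].
  by move: (H x); rewrite xA /= => /forallP /(_ y); rewrite yA nxy.
by apply/implyP => xA; apply/forallP => y; apply/implyP => yA; apply/implyP; apply: H.
Qed.

Lemma stableP (A : {set T}) :
  reflect (forall x y, x \in A -> y \in A -> ~~ e x y) (is_stable e A).
Proof.
apply: (iffP forallP) => [H x y xA yA | H x].
  by move: (H x); rewrite xA /= => /forallP /(_ y); rewrite yA.
by apply/implyP => xA; apply/forallP => y; apply/implyP => yA; apply: H.
Qed.

Hypotheses (e_sym : symmetric e) (e_irr : irreflexive e).

Lemma clique_add (v : T) (C : {set T}) :
  (forall y, y \in C -> e v y) -> is_clique e C -> is_clique e (v |: C).
Proof.
move=> vC /cliqueP clC; apply/cliqueP => x y.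
rewrite !inE => /predU1P [->|xC] /predU1P [->|yC]; rewrite ?eqxx //.
- by move=> _; apply: vC.
- by move=> _; rewrite e_sym; apply: vC.
- exact: clC.
Qed.

Lemma stable_add (v : T) (C : {set T}) :
  (forall y, y \in C -> ~~ e v y) -> is_stable e C -> is_stable e (v |: C).
Proof.
move=> vC /stableP stC; apply/stableP => x y.
rewrite !inE => /predU1P [->|xC] /predU1P [->|yC].
- by rewrite e_irr.
- exact: vC.
- by rewrite e_sym; apply: vC.
- exact: stC.
Qed.

End Cliques.

(* Ramsey's theorem relativised to a subset A of an arbitrary finite graph:
   [ramsey_set k l n] holds when every n-subset contains a k-clique or a
   stable l-set.  This form is closed under the inductive step. *)
Definition ramsey_set (k l n : nat) : Prop :=
  forall (T : finType) (e : rel T) (A : {set T}), simple_graph e -> n <= #|A| ->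
  exists2 C : {set T}, C \subset A &
    (#|C| = k /\ is_clique e C) \/ (#|C| = l /\ is_stable e C).

Lemma setU1_subset (T : finType) (v : T) (A C : {set T}) :
  v \in A -> C \subset A :\ v -> v |: C \subset A /\ #|v |: C| = #|C|.+1.
Proof.
move=> vA sC; have vC : v \notin C by apply/negP => /(subsetP sC); rewrite !inE eqxx.
split; last by rewrite cardsU1 vC.
by rewrite subUset sub1set vA (subset_trans sC) ?subD1set.
Qed.

(* Erdős–Szekeres: R(k+1,l+1) <= R(k,l+1) + R(k+1,l). *)
Lemma ramsey_set_exists k l : exists n, ramsey_set k l n.
Proof.
elim: k l => [|k IHk] l.
  exists 0 => T e A _ _; exists set0; rewrite ?sub0set //.
  by left; split; [rewrite cards0 | apply/cliqueP => x y; rewrite inE].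
elim: l => [|l IHl].
  exists 0 => T e A _ _; exists set0; rewrite ?sub0set //.
  by right; split; [rewrite cards0 | apply/stableP => x y; rewrite inE].
have [n1 H1] := IHk l.+1; have [n2 H2] := IHl.
exists (n1 + n2).+1 => T e A se hA; have [e_sym e_irr] := se.
have /set0Pn [v vA] : A != set0 by rewrite -card_gt0; apply: leq_trans hA.
have cA := cardsD1 v A; have := cardsID (nbhd e v) (A :\ v); rewrite vA in cA.
have [hN _|hN hM] := leqP n1 #|(A :\ v) :&: nbhd e v|.
  have [C sC [[cC clC]|stC]] := H1 T e _ se hN; last first.
    exists C; last by right.
    exact: subset_trans sC (subset_trans (subsetIl _ _) (subD1set A v)).
  have [sCv cCv] := setU1_subset vA (subset_trans sC (subsetIl _ _)).
  exists (v |: C) => //; left; split; first by rewrite cCv cC.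
  by apply: clique_add => // y /(subsetP sC); rewrite !inE => /andP [_].
have {}hM : n2 <= #|(A :\ v) :\: nbhd e v| by lia.
have [C sC [clC|[cC stC]]] := H2 T e _ se hM.
  exists C; last by left.
  exact: subset_trans sC (subset_trans (subsetDl _ _) (subD1set A v)).
have [sCv cCv] := setU1_subset vA (subset_trans sC (subsetDl _ _)).
exists (v |: C) => //; right; split; first by rewrite cCv cC.
by apply: stable_add => // y /(subsetP sC); rewrite !inE => /andP [].
Qed.

Lemma ramsey_prop_set k l n : ramsey_prop k l n -> ramsey_set k l n.
Proof.
move=> H T e A [e_sym e_irr] hn.
pose f : 'I_#|A| -> T := enum_val.
pose e' : rel 'I_#|A| := fun i j => e (f i) (f j).
have se' : simple_graph e' by split=> [i j|i]; [apply: e_sym | apply: e_irr].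
have cardC (C' : {set 'I_#|A|}) : #|f @: C'| = #|C'|.
  by rewrite card_in_imset // => i j _ _; apply: enum_val_inj.
have subA (C' : {set 'I_#|A|}) : f @: C' \subset A.
  by apply/subsetP => x /imsetP [i _ ->]; apply: enum_valP.
have [[C' [cC /cliqueP clC]]|[C' [cC /stableP stC]]] := H _ e' se' hn.
  exists (f @: C') => //; left; split; first by rewrite cardC.
  apply/cliqueP => x y /imsetP [i iC ->] /imsetP [j jC ->] nij.
  by apply: clC => //; apply: contra nij => /eqP ->.
exists (f @: C') => //; right; split; first by rewrite cardC.
by apply/stableP => x y /imsetP [i iC ->] /imsetP [j jC ->]; apply: stC.
Qed.

Lemma ramsey_set_prop k l n : ramsey_set k l n -> ramsey_prop k l n.
Proof.
move=> H m e se hm; rewrite -{1}(card_ord m) -cardsT in hm.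
by have [C _ [?|?]] := H _ e setT se hm; [left | right]; exists C.
Qed.

Lemma RamseyP k l : ramsey_set k l (Ramsey k l).
Proof.
apply: ramsey_prop_set; rewrite /Ramsey; case: excluded_middle_informative => [h|hn].
  by case: ex_minnP => n; rewrite /ramsey_bool; case: excluded_middle_informative.
exfalso; apply: hn; have [n Hn] := ramsey_set_exists k l; exists n.
rewrite /ramsey_bool; case: excluded_middle_informative => // [[]].
exact: ramsey_set_prop.
Qed.

Section Neighbourhoods.
Variables (T : finType) (e : rel T).

Definition cnbhd (S : {set T}) : {set T} := S :|: nbhdS e S.

Lemma nbhdSP (S : {set T}) w :
  reflect (exists2 v, v \in S & e v w) (w \in nbhdS e S).
Proof.
apply: (iffP bigcupP) => [[v vS]|[v vS evw]]; first by rewrite inE; exists v.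
by exists v => //; rewrite inE.
Qed.

Lemma in_nbhdS (S : {set T}) v w : v \in S -> e v w -> w \in nbhdS e S.
Proof. by move=> vS evw; apply/nbhdSP; exists v. Qed.

Lemma nbhdS_mono (S S' : {set T}) : S \subset S' -> nbhdS e S \subset nbhdS e S'.
Proof.
move=> sS; apply/subsetP => w /nbhdSP [v vS evw].
exact: in_nbhdS (subsetP sS v vS) evw.
Qed.

Lemma cnbhd_mono (S S' : {set T}) : S \subset S' -> cnbhd S \subset cnbhd S'.
Proof. by move=> sS; rewrite setUSS ?nbhdS_mono. Qed.

Lemma exit_edge (U : {set T}) x y :
  connect e x y -> x \in U -> y \notin U -> exists u v, [/\ u \in U, v \notin U & e u v].
Proof.
case/connectP => p; elim: p x => [|z p IH] x /=; first by move=> _ -> ->.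
case/andP => exz pz py xU yU; case zU: (z \in U); first exact: IH pz py zU yU.
by exists x, z; rewrite zU.
Qed.

End Neighbourhoods.

Section Embeddings.
Variables (T : finType) (e : rel T).
Hypotheses (e_sym : symmetric e) (e_irr : irreflexive e).

Lemma clique_induced n (C : {set T}) :
  #|C| = n -> is_clique e C -> has_induced (complete_rel n) e.
Proof.
move=> cC /cliqueP clC.
pose f (i : 'I_n) : T := enum_val (cast_ord (esym cC) i).
have f_inj : injective f by move=> i j /enum_val_inj /cast_ord_inj.
exists f; split => // i j; rewrite /complete_rel.
have [<-|nij] := eqVneq i j; first by rewrite e_irr.
by apply: clC; rewrite ?enum_valP ?(inj_eq f_inj).
Qed.

Lemma sdk_induced s (v : T) (D : {set T}) (p : T -> T) :
  #|D| = s ->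
  (forall x, x \in D -> e v x) ->
  (forall x, x \in D -> ~~ e v (p x) /\ v != p x) ->
  is_stable e D ->
  (forall x y, x \in D -> y \in D -> ~~ e (p x) (p y)) ->
  (forall x y, x \in D -> y \in D -> e x (p y) = (x == y)) ->
  has_induced (sdk_rel s) e.
Proof.
move=> cD vD vp /stableP stD stp pm.
pose d (i : 'I_s) : T := enum_val (cast_ord (esym cD) i).
have dD i : d i \in D by apply: enum_valP.
have d_inj : injective d by move=> i j /enum_val_inj /cast_ord_inj.
have pd_inj : injective (p \o d).
  by move=> i j /= hij; apply/d_inj/eqP; rewrite -pm ?dD // -hij pm ?dD ?eqxx.
have vNd i : v != d i by apply: contraTneq (vD _ (dD i)) => ->; rewrite e_irr.
have dNp i j : d i != p (d j).
  apply: contraNneq (stD _ _ (dD j) (dD i)) => ->.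
  by rewrite pm ?dD ?eqxx.
pose f (o : option ('I_s + 'I_s)) : T :=
  match o with None => v | Some (inl i) => d i | Some (inr i) => p (d i) end.
exists f; split.
  move=> [[i|i]|] [[j|j]|] //= hf.
  - by rewrite (d_inj _ _ hf).
  - by move/eqP: (dNp i j); rewrite hf.
  - by move/eqP: (vNd i); rewrite hf.
  - by move/eqP: (dNp j i); rewrite hf.
  - by rewrite (pd_inj _ _ hf).
  - by case: (vp _ (dD i)) => _; rewrite hf eqxx.
  - by move/eqP: (vNd j); rewrite hf.
  - by case: (vp _ (dD j)) => _; rewrite hf eqxx.
move=> [[i|i]|] [[j|j]|] /=.
- exact/negbTE/stD.
- by rewrite pm ?dD ?(inj_eq d_inj).
- by rewrite e_sym vD.
- by rewrite e_sym pm ?dD ?(inj_eq d_inj) 1?eq_sym.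
- exact/negbTE/stp.
- by rewrite e_sym; case: (vp _ (dD i)) => /negbTE.
- by rewrite vD.
- by case: (vp _ (dD j)) => /negbTE.
- by rewrite e_irr.
Qed.

Definition ipath (x0 : T) (p : seq T) : Prop :=
  forall k l, k < size p -> l < size p ->
    e (nth x0 p k) (nth x0 p l) = (k.+1 == l) || (l.+1 == k).

Lemma ipath_rcons x0 p w :
  ipath x0 p -> (forall k, k < size p -> e (nth x0 p k) w = (k.+1 == size p)) ->
  ipath x0 (rcons p w).
Proof.
move=> hp hw k l; rewrite size_rcons !nth_rcons !ltnS => hk hl.
have [hk'|->] : k < size p \/ k = size p by lia.
  have [hl'|->] : l < size p \/ l = size p by lia.
    by rewrite hk' hl' hp.
  rewrite hk' ltnn eqxx hw //.
  by case: eqP => //= _; symmetry; apply/eqP; lia.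
rewrite ltnn eqxx.
have [hl'|->] : l < size p \/ l = size p by lia.
  rewrite hl' e_sym hw //.
  by case: eqP => //= _; symmetry; apply/eqP; lia.
by rewrite ltnn eqxx e_irr orbb; symmetry; apply/eqP; lia.
Qed.

Lemma ipath_extend x0 (U : {set T}) q b w :
  {subset q <= U} -> uniq (rcons q b) -> ipath x0 (rcons q b) ->
  w \notin U -> (forall u, u \in U -> ~~ e u w) -> e b w ->
  uniq (rcons (rcons q b) w) /\ ipath x0 (rcons (rcons q b) w).
Proof.
move=> qU uq pq wU noadj ebw; split.
  rewrite rcons_uniq uq andbT mem_rcons inE negb_or.
  apply/andP; split; first by apply: contraTneq ebw => ->; rewrite e_irr.
  by apply: contra wU => /qU.
apply: ipath_rcons => // k; rewrite size_rcons nth_rcons ltnS leq_eqVlt.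
case/orP => [/eqP ->|hk]; first by rewrite ltnn !eqxx.
by rewrite hk (negbTE (noadj _ (qU _ (mem_nth x0 hk)))) eqSS ltn_eqF.
Qed.

Lemma ipath_induced x0 t p :
  uniq p -> size p = t -> ipath x0 p -> has_induced (path_rel t) e.
Proof.
move=> up sp hp; exists (fun i : 'I_t => nth x0 p i); split.
  by move=> i j /eqP; rewrite nth_uniq ?sp // => /eqP /val_inj.
by move=> i j; rewrite hp ?sp.
Qed.

End Embeddings.

(* An induced K_n in the pull-back of e' along g is an induced K_n of e':
   adjacency of distinct images forces g to be injective on the copy. *)
Lemma complete_induced_comap (T U : finType) (e' : rel U) (g : T -> U) n :
  irreflexive e' -> has_induced (complete_rel n) [rel x y | e' (g x) (g y)] ->
  has_induced (complete_rel n) e'.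
Proof.
move=> e_irr [f [_ hf]]; exists (g \o f); split => [i j /= gij|i j]; last exact: hf.
apply/eqP; apply: contraT => nij.
by have := hf i j; rewrite /= /complete_rel nij gij e_irr.
Qed.

Lemma stable_of_noK4 (T : finType) (e : rel T) l (A : {set T}) :
  simple_graph e -> induced_free (complete_rel 4) e -> Ramsey 4 l <= #|A| ->
  exists2 C : {set T}, C \subset A & #|C| = l /\ is_stable e C.
Proof.
move=> se noK4 hA; have [_ e_irr] := se.
have [C sCA [[cC clC]|stC]] := RamseyP se hA; last by exists C.
by case: (noK4 (clique_induced e_irr cC clC)).
Qed.

Section MinimalDominating.
Variables (T : finType) (e : rel T).
Hypotheses (e_sym : symmetric e) (e_irr : irreflexive e).

Definition private_nbr (W X : {set T}) (x w : T) : Prop :=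
  [/\ w \in W, e w x & forall y, y \in X -> y != x -> ~~ e w y].

Lemma minimal_private (W Bj X : {set T}) x :
  minset (dom_prop e W Bj) X -> x \in X -> exists w, private_nbr W X x w.
Proof.
move=> /minsetP [/andP [sXB domX] minX] xX.
have : ~~ dom_prop e W Bj (X :\ x).
  apply/negP => /minX /(_ (subD1set X x)) eqX.
  by move: xX; rewrite -eqX !inE eqxx.
rewrite /dom_prop (subset_trans (subD1set X x) sXB) /=.
case/forallPn => w; rewrite negb_imply => /andP [wW].
rewrite negb_imply => /andP [wB noX].
move/forallP/(_ w): domX; rewrite wW wB => /existsP [y /andP [yX ewy]].
have yx : y = x.
  by apply: contraNeq _ noX => nyx; apply/existsP; exists y; rewrite !inE nyx yX.
exists w; split; rewrite -?yx // => z zX nzy; apply: contra _ noX => ewz.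
by apply/existsP; exists z; rewrite !inE -yx nzy zX ewz.
Qed.

Lemma minimal_private_map (W Bj X : {set T}) :
  minset (dom_prop e W Bj) X ->
  exists p : T -> T, forall x, x \in X -> private_nbr W X x (p x).
Proof.
move=> minX.
suff /fin_all_exists [p pP] : forall x, exists w, x \in X -> private_nbr W X x w.
  by exists p.
move=> x; case: (boolP (x \in X)) => [/(minimal_private minX) [w pw]|xNX].
  by exists w.
by exists x => /negP.
Qed.

(* Otherwise
   Ramsey (no K_4) gives a stable C ⊆ X with |C| = R(4,s), then Ramsey on
   p(C) (again no K_4) a D ⊆ C with p(D) stable and |D| = s, and v, D, p(D)
   span an induced SDK_s. *)
Lemma private_bound s v (X : {set T}) (p : T -> T) :
  induced_free (sdk_rel s) e -> induced_free (complete_rel 4) e ->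
  (forall x, x \in X -> e v x) ->
  (forall x, x \in X -> ~~ e v (p x) /\ v != p x) ->
  (forall x, x \in X -> e (p x) x) ->
  (forall x y, x \in X -> y \in X -> y != x -> ~~ e (p x) y) ->
  #|X| <= Ramsey 4 (Ramsey 4 s).
Proof.
move=> noSDK noK4 vX vp px pxy; rewrite leqNgt; apply/negP => /ltnW hX.
have [C sCX [cC stC]] := stable_of_noK4 (conj e_sym e_irr) noK4 hX.
pose ep := [rel x y | e (p x) (p y)].
have sep : simple_graph ep by split=> [x y|x] /=; [apply: e_sym | apply: e_irr].
have noK4p : induced_free (complete_rel 4) ep.
  by move=> /(complete_induced_comap e_irr) /noK4.
have [D sDC [cD /stableP stD]] := stable_of_noK4 sep noK4p (eq_leq (esym cC)).
have sDX x : x \in D -> x \in X by move=> xD; apply/(subsetP sCX)/(subsetP sDC).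
apply: noSDK; apply: (sdk_induced e_sym e_irr (v := v) (p := p) cD).
- by move=> x /sDX /vX.
- by move=> x /sDX /vp.
- by apply/stableP => x y xD yD; move/stableP: stC; apply; apply/(subsetP sDC).
- exact: stD.
- move=> x y xD yD; rewrite e_sym; have [->|nxy] := eqVneq x y; first by rewrite px ?sDX.
  by apply/negbTE/pxy; rewrite ?sDX.
Qed.

(* Each set X_i^j of the construction has at most R(4,R(4,s)) elements:
   its private neighbours lie in W_i, hence outside N[v_j]. *)
Lemma minimal_dom_bound s (S Bj X : {set T}) v :
  induced_free (sdk_rel s) e -> induced_free (complete_rel 4) e ->
  v \in S -> (forall b, b \in Bj -> e v b) ->
  minset (dom_prop e (~: (nbhdS e S :|: S)) Bj) X ->
  #|X| <= Ramsey 4 (Ramsey 4 s).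
Proof.
move=> noSDK noK4 vS vBj minX.
have [/andP [sXB _] _] := minsetP minX.
have [p pP] := minimal_private_map minX.
apply: (private_bound (v := v) (p := p) noSDK noK4).
- by move=> x /(subsetP sXB) /vBj.
- move=> x /pP [+ _ _]; rewrite !inE negb_or => /andP [pN pS].
  split; first by apply: contra pN; apply: in_nbhdS.
  by apply: contraNneq pS => <-.
- by move=> x /pP [].
- by move=> x y /pP [_ _ +] yX; apply.
Qed.

End MinimalDominating.

Lemma card_bigcup_seq (T : finType) (Xs : seq {set T}) r :
  (forall X, X \in Xs -> #|X| <= r) -> #|\bigcup_(X <- Xs) X| <= size Xs * r.
Proof.
elim: Xs => [|X Xs IH] H; first by rewrite big_nil cards0.
rewrite big_cons /= mulSn; apply: leq_trans (leq_card_setU _ _) _.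
by rewrite leq_add ?H ?mem_head // IH // => Y YXs; rewrite H // inE YXs orbT.
Qed.

Section Layers.
Variables (T : finType) (e : rel T) (B : {set T}).

Lemma Bparts_aux_layer (vs : seq T) (acc : {set T}) j : j < size vs ->
  exists2 v, v \in vs &
    forall b, b \in nth set0 (Bparts_aux e B acc vs) j -> (b \in B) && e v b.
Proof.
elim: vs acc j => [|v vs IH] acc [|j] //= hj.
  exists v; rewrite ?mem_head // => b.
  by rewrite !inE => /andP [/andP [_ bB] evb]; rewrite bB evb.
have [u uvs hu] := IH (acc :|: [set w in B :\: acc | e v w]) j hj.
by exists u; rewrite // inE uvs orbT.
Qed.

Lemma Bparts_aux_cover (vs : seq T) (acc : {set T}) b :
  b \in B -> (exists2 v, v \in vs & e v b) ->
  b \in acc \/ exists2 j, j < size vs & b \in nth set0 (Bparts_aux e B acc vs) j.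
Proof.
elim: vs acc => [|v vs IH] acc bB [u]; first by rewrite in_nil.
case bacc: (b \in acc); first by left.
rewrite inE => /predU1P [->|uvs] eub.
  by right; exists 0; rewrite //= !inE bacc bB eub.
have [|[j hj hb]] :=
  IH (acc :|: [set w in B :\: acc | e v w]) bB (ex_intro2 _ _ u uvs eub).
  by rewrite inE bacc /= => hb; right; exists 0.
by right; exists j.+1.
Qed.

Lemma Bparts_layer (vs : seq T) j : j < size vs ->
  exists2 v, v \in vs & forall b, b \in nth set0 (Bparts e B vs) j -> (b \in B) && e v b.
Proof. exact: Bparts_aux_layer. Qed.

Lemma Bparts_cover (vs : seq T) v b : b \in B -> v \in vs -> e v b ->
  exists2 j, j < size vs & b \in nth set0 (Bparts e B vs) j.
Proof.
move=> bB vvs evb.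
by have [|//] := Bparts_aux_cover set0 bB (ex_intro2 _ _ v vvs evb); rewrite inE.
Qed.

End Layers.

Section Step.
Variables (T : finType) (e : rel T).
Hypotheses (e_sym : symmetric e) (e_irr : irreflexive e).

Definition bfs_step (S S' : {set T}) : Prop :=
  [/\ S \subset S', S' \subset cnbhd e S &
      forall w b, w \notin cnbhd e S -> b \in nbhdS e S -> e b w ->
        w \in nbhdS e S'].

(* Every step of the construction has these properties: the new vertices
   X^j lie in N(S), and X^j dominates the vertices of W seeing B^j. *)
Lemma constr_step_bfs (S S' : {set T}) : constr_step e S S' -> bfs_step S S'.
Proof.
move=> [vs [uvs [memvs [Xs [szXs [minXs ->]]]]]]; set B := nbhdS e S.
have XsB X : X \in Xs -> X \subset B.
  move=> /(nthP set0) [j hj <-]; rewrite szXs in hj.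
  have [/andP [sX _] _] := minsetP (minXs j hj).
  have [v _ vBj] := Bparts_layer e B hj.
  by apply/subsetP => x /(subsetP sX) /vBj /andP [].
split; first exact: subsetUl.
  by rewrite setUS // bigcup_seq; apply/bigcupsP => X /XsB.
move=> w b wN bB ebw; have /nbhdSP [v vS evb] := bB.
have [j hj bj] := Bparts_cover bB (etrans (memvs v) vS) evb.
have [/andP [_ /forallP /(_ w) domX] _] := minsetP (minXs j hj).
move: domX; rewrite inE setUC wN /=.
have -> /= : [exists b0 in nth set0 (Bparts e B vs) j, e w b0].
  by apply/existsP; exists b; rewrite bj e_sym.
case/existsP => x /andP [xX ewx]; apply: (in_nbhdS (v := x)); last by rewrite e_sym.
rewrite inE bigcup_seq; apply/orP; right; apply/bigcupP; exists (nth set0 Xs j) => //.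
by rewrite mem_nth ?szXs.
Qed.

(* Size control: S' = S ∪ ⋃_j X^j with |S| pieces of size <= R(4,R(4,s)). *)
Lemma constr_step_card s (S S' : {set T}) :
  induced_free (sdk_rel s) e -> induced_free (complete_rel 4) e ->
  constr_step e S S' -> #|S'| <= #|S| * (1 + Ramsey 4 (Ramsey 4 s)).
Proof.
move=> noSDK noK4 [vs [uvs [memvs [Xs [szXs [minXs ->]]]]]].
have cS : #|S| = size vs.
  by rewrite -(card_uniqP uvs); apply: eq_card => x; rewrite memvs.
apply: leq_trans (leq_card_setU _ _) _.
rewrite mulnDr muln1 leq_add2l cS -szXs.
apply: card_bigcup_seq => _ /(nthP set0) [j hj <-]; rewrite szXs in hj.
have [v vvs vBj] := Bparts_layer e (nbhdS e S) hj.
apply: (minimal_dom_bound e_sym e_irr (v := v) noSDK noK4 _ _ (minXs j hj)).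
  by rewrite -memvs.
by move=> b /vBj /andP [].
Qed.

Lemma bfs_step_back (S S' : {set T}) w b :
  bfs_step S S' -> w \notin cnbhd e S' -> b \in nbhdS e S' -> e b w ->
  [/\ w \notin cnbhd e S, forall u, u \in cnbhd e S -> ~~ e u w,
      b \notin cnbhd e S & exists2 z, z \in nbhdS e S & e z b].
Proof.
move=> [sub sub' dom] wN bN ebw.
have wN0 : w \notin cnbhd e S by apply: contra wN; apply/subsetP/cnbhd_mono.
have noadj u : u \in cnbhd e S -> ~~ e u w.
  rewrite inE => /orP [uS|uB]; apply: contra wN => euw; rewrite inE.
    by rewrite (in_nbhdS (subsetP sub u uS) euw) orbT.
  by rewrite (dom w u wN0 uB euw) orbT.
have bN0 : b \notin cnbhd e S by apply: contraL ebw; apply: noadj.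
have /nbhdSP [z zS' ezb] := bN; split => //; exists z => //.
have := subsetP sub' z zS'; rewrite inE => /orP [zS|//].
by move: bN0; rewrite inE (in_nbhdS zS ezb) orbT.
Qed.

End Step.

Section Chain.
Variables (T : finType) (e : rel T) (a : T) (n : nat) (S : nat -> {set T}).
Hypothesis S1 : S 1 = [set a].

Lemma chain_card c :
  (forall i, 1 <= i <= n -> #|S i.+1| <= #|S i| * c) -> #|S n.+1| <= c ^ n.
Proof.
move=> grow; suff H i : i <= n -> #|S i.+1| <= c ^ i by apply: H.
elim: i => [|i IH] hi; first by rewrite S1 cards1.
rewrite expnSr; apply: leq_trans (grow i.+1 _) _; first lia.
by rewrite leq_mul ?IH //; lia.
Qed.

Hypotheses (e_sym : symmetric e) (e_irr : irreflexive e).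
Hypothesis steps : forall i, 1 <= i <= n -> bfs_step e (S i) (S i.+1).

Lemma chain_root i : 1 <= i <= n.+1 -> a \in S i.
Proof.
elim: i => [//|[|i] IH] hi; first by rewrite S1 set11.
have /steps [sub _ _] : 1 <= i.+1 <= n by lia.
by apply/(subsetP sub)/IH; lia.
Qed.

Lemma chain_induced_path i : 1 <= i <= n.+1 ->
  forall w b, w \notin cnbhd e (S i) -> b \in nbhdS e (S i) -> e b w ->
  exists q : seq T, [/\ size q = i, {subset q <= cnbhd e (S i)},
                        uniq (rcons q w) & ipath e a (rcons q w)].
Proof.
elim: i => [//|[|i] IH] hi w b wN bB ebw.
  have p1 : ipath e a [:: b] by move=> [|k] [|l] //=; rewrite e_irr.
  have q0 : {subset [::] <= (set0 : {set T})} by [].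
  have noadj u : u \in (set0 : {set T}) -> ~~ e u w by rewrite in_set0.
  have [uq pq] := ipath_extend e_sym e_irr q0 isT p1 (negbT (in_set0 w)) noadj ebw.
  exists [:: b]; split=> //.
  by move=> u; rewrite inE => /eqP ->; rewrite inE bB orbT.
have /steps step : 1 <= i.+1 <= n by lia.
have [wN0 noadj bN0 [z zB ezb]] := bfs_step_back step wN bB ebw.
have [q [sq qU uq pq]] := IH ltac:(lia) b z bN0 zB ezb.
have [uq' pq'] := ipath_extend e_sym e_irr qU uq pq wN0 noadj ebw.
exists (rcons q b); split; rewrite ?size_rcons ?sq // => u.
rewrite mem_rcons inE => /predU1P [->|/qU]; first by rewrite inE bB orbT.
by case: step => sub _ _; apply/subsetP/cnbhd_mono.
Qed.

Lemma chain_dominating :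
  connected_graph e -> induced_free (path_rel n.+2) e -> ~: cnbhd e (S n.+1) = set0.
Proof.
move=> conn noP; apply/setP => w; rewrite inE in_set0; apply/negbTE/negPn.
apply: contraT => wN; have hn : 1 <= n.+1 <= n.+1 by rewrite leqnn.
have aN : a \in cnbhd e (S n.+1) by rewrite inE chain_root.
have [u [v [uN vN euv]]] := exit_edge (conn a w) aN wN.
have uB : u \in nbhdS e (S n.+1).
  move: uN; rewrite inE => /orP [uS|//].
  by move: vN; rewrite inE (in_nbhdS uS euv) orbT.
have [q [sq _ uq pq]] := chain_induced_path hn vN uB euv.
by case: noP; apply: (ipath_induced uq _ pq); rewrite size_rcons sq.
Qed.

End Chain.

Theorem lemma3p3 (s t : nat) (T : finType) (e : rel T) (a : T)
  (S : nat -> {set T}) :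
  0 < s -> 2 <= t ->
  simple_graph e -> connected_graph e ->
  induced_free (path_rel t) e ->
  induced_free (sdk_rel s) e ->
  induced_free (complete_rel 4) e ->
  S 1 = [set a] ->
  (forall i, 1 <= i <= t - 2 -> constr_step e (S i) (S i.+1)) ->
  #|S (t - 1)| <= (1 + Ramsey 4 (Ramsey 4 s)) ^ (t - 2) /\
  ~: (S (t - 1) :|: nbhdS e (S (t - 1))) = set0.
Proof.
move=> _ t2 [e_sym e_irr] conn noP noSDK noK4 S1 steps.
have -> : t - 1 = (t - 2).+1 by lia.
split.
  apply: (chain_card S1) => i /steps step.
  exact (constr_step_card e_sym e_irr noSDK noK4 step).
have bfs i : 1 <= i <= t - 2 -> bfs_step e (S i) (S i.+1).
  by move=> /steps; apply: constr_step_bfs.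
have noP' : induced_free (path_rel (t - 2).+2) e by have -> : (t - 2).+2 = t by lia.
exact: chain_dominating S1 e_sym e_irr bfs conn noP'.
Qed.
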